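(* Let $X$ be a sequentially complete Hausdorff locally convex vector space and let $x(\cdot):[a,b]\to X$ have weakly compact semivariation on $[a,b]$. Then for every continuous $g:[a,b]\to\mathbb{C}$ the integral $\int_a^b g(t)\,dx(t)$ exists in $X$.
   Context: For $a\le b$ let $E(a,b)=\{\sum_{i=1}^n[x(t_{2i})-x(t_{2i-1})] : n\ge1,\ a\le t_1<t_2<\dots<t_{2n}\le b\}$. The function $x(\cdot)$ has weakly compact semivariation on $[a,b]$ if $E(a,b)$ is relatively weakly compact in $X$ (weak topology $\sigma(X,X')$, $X'$ the topological dual). The integral $\int_a^b g\,dx$ is the limit in the topology of $X$, as the mesh $d=\max_i|t_i-t_{i-1}|\to0$, of the Riemann–Stieltjes sums $\sum_{i=1}^n g(s_i)[x(t_i)-x(t_{i-1})]$ over tagged divisions $a=t_0\le\dots\le t_n=b$, $s_i\in[t_{i-1},t_i]$. *)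

From Stdlib Require Import Reals List.
Open Scope R_scope.

Record Cplx := mkC { Re : R ; Im : R }.
Definition C0 : Cplx := mkC 0 0.
Definition C1 : Cplx := mkC 1 0.
Definition Cadd (z w : Cplx) : Cplx := mkC (Re z + Re w) (Im z + Im w).
Definition Copp (z : Cplx) : Cplx := mkC (- Re z) (- Im z).
Definition Cmul (z w : Cplx) : Cplx :=
  mkC (Re z * Re w - Im z * Im w) (Re z * Im w + Im z * Re w).
Definition Cnorm (z : Cplx) : R := sqrt (Re z * Re z + Im z * Im z).

(** * Hausdorff locally convex spaces over C, given by a separating family
    of seminorms (p i)_{i : Idx} which generates the topology. *)
Record LCS := {
  carrier :> Type ;
  vzero : carrier ;
  vadd : carrier -> carrier -> carrier ;
  vopp : carrier -> carrier ;
  vscal : Cplx -> carrier -> carrier ;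
  vadd_assoc : forall x y z, vadd x (vadd y z) = vadd (vadd x y) z ;
  vadd_comm : forall x y, vadd x y = vadd y x ;
  vadd_0 : forall x, vadd x vzero = x ;
  vadd_opp : forall x, vadd x (vopp x) = vzero ;
  vscal_1 : forall x, vscal C1 x = x ;
  vscal_assoc : forall a b x, vscal a (vscal b x) = vscal (Cmul a b) x ;
  vscal_distr_v : forall a x y, vscal a (vadd x y) = vadd (vscal a x) (vscal a y) ;
  vscal_distr_c : forall a b x, vscal (Cadd a b) x = vadd (vscal a x) (vscal b x) ;
  Idx : Type ;
  sn : Idx -> carrier -> R ;
  sn_triangle : forall i x y, sn i (vadd x y) <= sn i x + sn i y ;
  sn_homog : forall i a x, sn i (vscal a x) = Cnorm a * sn i x ;
  sn_separating : forall x, (forall i, sn i x = 0) -> x = vzero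
}.

Arguments vzero {_}.
Arguments vadd {_} _ _.
Arguments vopp {_} _.
Arguments vscal {_} _ _.
Arguments sn {_} _ _.

Section Defs.
Variable X : LCS.

Definition vsub (x y : X) : X := vadd x (vopp y).

Fixpoint vsum (f : nat -> X) (n : nat) : X :=
  match n with O => vzero | S m => vadd (vsum f m) (f m) end.

Definition seq_converges (u : nat -> X) (l : X) : Prop :=
  forall (i : Idx X) (eps : R), eps > 0 ->
    exists N, forall n, (n >= N)%nat -> sn i (vsub (u n) l) < eps.

Definition cauchy_seq (u : nat -> X) : Prop :=
  forall (i : Idx X) (eps : R), eps > 0 ->
    exists N, forall m n, (m >= N)%nat -> (n >= N)%nat -> sn i (vsub (u m) (u n)) < eps.

Definition sequentially_complete : Prop :=
  forall u, cauchy_seq u -> exists l, seq_converges u l.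

(** Topological dual X': linear functionals continuous for the topology
    generated by the seminorms (basic neighbourhoods of x:
    {y | forall i in L, p_i (y - x) < delta}, L finite). *)
Definition is_linear_functional (f : X -> Cplx) : Prop :=
  (forall x y, f (vadd x y) = Cadd (f x) (f y)) /\
  (forall a x, f (vscal a x) = Cmul a (f x)).

Definition continuous_functional (f : X -> Cplx) : Prop :=
  forall (x : X) (eps : R), eps > 0 ->
    exists (L : list (Idx X)) (delta : R), delta > 0 /\
      forall y, (forall i, In i L -> sn i (vsub y x) < delta) ->
        Cnorm (Cadd (f y) (Copp (f x))) < eps.

Definition in_dual (f : X -> Cplx) : Prop :=
  is_linear_functional f /\ continuous_functional f.

Definition weakly_open (U : X -> Prop) : Prop :=
  forall x, U x ->
    exists (fs : list (X -> Cplx)) (delta : R),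
      (forall f, In f fs -> in_dual f) /\ delta > 0 /\
      forall y, (forall f, In f fs -> Cnorm (Cadd (f y) (Copp (f x))) < delta) -> U y.

Definition weak_closure (E : X -> Prop) (x : X) : Prop :=
  forall U, weakly_open U -> U x -> exists y, U y /\ E y.

Definition weakly_compact (K : X -> Prop) : Prop :=
  forall (J : Type) (U : J -> X -> Prop),
    (forall j, weakly_open (U j)) ->
    (forall x, K x -> exists j, U j x) ->
    exists (l : list J), forall x, K x -> exists j, In j l /\ U j x.

Definition relatively_weakly_compact (E : X -> Prop) : Prop :=
  weakly_compact (weak_closure E).

Definition Eab (x : R -> X) (a b : R) (e : X) : Prop :=
  exists (n : nat) (t : nat -> R),
    (n >= 1)%nat /\ a <= t 1%nat /\
    (forall k, (1 <= k < 2 * n)%nat -> t k < t (S k)) /\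
    t (2 * n)%nat <= b /\
    e = vsum (fun k => vsub (x (t (2 * k + 2)%nat)) (x (t (2 * k + 1)%nat))) n.

Definition weakly_compact_semivariation (x : R -> X) (a b : R) : Prop :=
  relatively_weakly_compact (Eab x a b).

Definition tagged_division (a b : R) (n : nat) (t s : nat -> R) : Prop :=
  t O = a /\ t n = b /\
  (forall k, (1 <= k <= n)%nat -> t (pred k) <= t k) /\
  (forall k, (1 <= k <= n)%nat -> t (pred k) <= s k <= t k).

Definition mesh_lt (n : nat) (t : nat -> R) (delta : R) : Prop :=
  forall k, (1 <= k <= n)%nat -> t k - t (pred k) < delta.

Definition RS_sum (g : R -> Cplx) (x : R -> X) (n : nat) (t s : nat -> R) : X :=
  vsum (fun k => vscal (g (s (S k))) (vsub (x (t (S k))) (x (t k)))) n.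

Definition RS_integral_is (g : R -> Cplx) (x : R -> X) (a b : R) (I : X) : Prop :=
  forall (i : Idx X) (eps : R), eps > 0 ->
    exists delta, delta > 0 /\
      forall n t s, tagged_division a b n t s -> mesh_lt n t delta ->
        sn i (vsub (RS_sum g x n t s) I) < eps.

Definition RS_integrable (g : R -> Cplx) (x : R -> X) (a b : R) : Prop :=
  exists I, RS_integral_is g x a b I.

End Defs.

Definition continuous_on_C (g : R -> Cplx) (a b : R) : Prop :=
  forall t, a <= t <= b -> forall eps, eps > 0 ->
    exists delta, delta > 0 /\
      forall u, a <= u <= b -> Rabs (u - t) < delta ->
        Cnorm (Cadd (g u) (Copp (g t))) < eps.

(** Let [E = E(a,b)] be the set of sums of increments of [x] over finitely
    many disjoint subintervals of [[a,b]].  The proof has two halves.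

    A relatively weakly compact set is weakly bounded: every
      [f] in the dual is bounded on it.  By a gliding-hump argument, which
      uses the Hahn–Banach theorem (proved here from Zorn's lemma), a weakly
      bounded set is bounded for every seminorm: [p_i e <= B_i] on [E].
    - Cauchy estimate.  Sums [sum_k c_k (x(u_{k+1}) - x(u_k))] over a monotone
      chain in [[a,b]] with real [c_k] in [[-1,1]] are convex combinations of
      differences of two elements of [E ∪ {0}], hence have [p_i <= 2 B_i];
      complex coefficients of modulus [<= eta] give [p_i <= 4 B_i eta].
      Writing the difference of two Riemann–Stieltjes sums over their common
      refinement, with coefficients [g(s) - g(s')] that are small by uniform
      continuity of [g], gives [p_i (S(P) - S(P')) <= 4 B_i eta] as soon as
      both meshes are small, with a mesh bound independent of [i].
    Such a uniform Cauchy estimate yields, by sequential completeness, the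
    limit of the Riemann–Stieltjes sums. *)

From Stdlib Require Import Reals Lra Lia List ClassicalEpsilon Classical.
From Coquelicot Require Import Hierarchy Series.
From mathcomp Require classical_sets boolp.
From Corelib Require ssrbool.
Open Scope R_scope.

Lemma Rabs_le_inv r e : Rabs r <= e -> - e <= r <= e.
Proof. unfold Rabs. destruct (Rcase_abs r); lra. Qed.

Lemma Cnorm_real r : Cnorm (mkC r 0) = Rabs r.
Proof.
  unfold Cnorm; simpl. replace (r * r + 0 * 0) with (Rsqr r) by (unfold Rsqr; ring).
  apply sqrt_Rsqr_abs.
Qed.

Lemma Cnorm_nonneg z : 0 <= Cnorm z.
Proof. apply sqrt_pos. Qed.

Lemma Re_le_Cnorm z : Rabs (Re z) <= Cnorm z.
Proof.
  unfold Cnorm. rewrite <- sqrt_Rsqr_abs. apply sqrt_le_1_alt. unfold Rsqr.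
  pose proof (Rle_0_sqr (Im z)). unfold Rsqr in H. lra.
Qed.

Lemma Im_le_Cnorm z : Rabs (Im z) <= Cnorm z.
Proof.
  unfold Cnorm. rewrite <- sqrt_Rsqr_abs. apply sqrt_le_1_alt. unfold Rsqr.
  pose proof (Rle_0_sqr (Re z)). unfold Rsqr in H. lra.
Qed.

Lemma Cnorm_le_sum z : Cnorm z <= Rabs (Re z) + Rabs (Im z).
Proof.
  destruct z as [p q]; unfold Cnorm; simpl.
  pose proof (Rabs_pos p); pose proof (Rabs_pos q).
  rewrite <- (sqrt_Rsqr (Rabs p + Rabs q)) by lra.
  apply sqrt_le_1_alt. unfold Rsqr.
  assert (p * p = Rabs p * Rabs p) by (rewrite <- Rabs_mult, Rabs_right; nra).
  assert (q * q = Rabs q * Rabs q) by (rewrite <- Rabs_mult, Rabs_right; nra).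
  nra.
Qed.

Lemma Cnorm_triangle z w : Cnorm (Cadd z w) <= Cnorm z + Cnorm w.
Proof.
  destruct z as [p q]; destruct w as [r s]; unfold Cnorm, Cadd; simpl.
  set (A := p * p + q * q). set (B := r * r + s * s).
  assert (HA : 0 <= A) by (unfold A; nra). assert (HB : 0 <= B) by (unfold B; nra).
  pose proof (sqrt_pos A); pose proof (sqrt_pos B).
  rewrite <- (sqrt_Rsqr (sqrt A + sqrt B)) by lra.
  apply sqrt_le_1_alt. unfold Rsqr.
  replace ((sqrt A + sqrt B) * (sqrt A + sqrt B))
    with (sqrt A * sqrt A + sqrt B * sqrt B + 2 * (sqrt A * sqrt B)) by ring.
  rewrite !sqrt_sqrt, <- sqrt_mult by auto.
  (* Cauchy–Schwarz in R^2 *)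
  assert (p * r + q * s <= sqrt (A * B)).
  { destruct (Rle_or_lt (p * r + q * s) 0). { pose proof (sqrt_pos (A * B)); lra. }
    rewrite <- (sqrt_Rsqr (p * r + q * s)) by lra. apply sqrt_le_1_alt.
    unfold Rsqr, A, B. pose proof (Rle_0_sqr (p * s - q * r)). unfold Rsqr in *. nra. }
  unfold A, B in *. nra.
Qed.

Lemma Cnorm_Csub_sym z w : Cnorm (Cadd z (Copp w)) = Cnorm (Cadd w (Copp z)).
Proof. unfold Cnorm, Cadd, Copp; simpl. f_equal; ring. Qed.

Arguments vadd_assoc {_} _ _ _.
Arguments vadd_comm {_} _ _.
Arguments vadd_0 {_} _.
Arguments vadd_opp {_} _.
Arguments vscal_1 {_} _.
Arguments vscal_assoc {_} _ _ _.
Arguments vscal_distr_v {_} _ _ _.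
Arguments vscal_distr_c {_} _ _ _.
Arguments sn_triangle {_} _ _ _.
Arguments sn_homog {_} _ _ _.
Arguments vsub {_} _ _.
Arguments vsum {_} _ _.

Section VectorAlgebra.
Context {X : LCS}.
Implicit Types x y z : X.
Implicit Types f h : nat -> X.

Lemma vadd_0l x : vadd vzero x = x.
Proof. rewrite vadd_comm; apply vadd_0. Qed.

Lemma vadd_oppl x : vadd (vopp x) x = vzero.
Proof. rewrite vadd_comm; apply vadd_opp. Qed.

Lemma vadd_cancel_l y x z : vadd y x = vadd y z -> x = z.
Proof.
  intros H. rewrite <- (vadd_0l x), <- (vadd_0l z), <- (vadd_oppl y), <- !vadd_assoc, H.
  reflexivity.
Qed.

Lemma vopp_unique x y : vadd x y = vzero -> y = vopp x.
Proof. intros H. apply (vadd_cancel_l x). rewrite H, vadd_opp. reflexivity. Qed.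

Lemma vopp_opp x : vopp (vopp x) = x.
Proof. symmetry. apply vopp_unique, vadd_oppl. Qed.

Lemma vadd_swap4 (w x y z : X) : vadd (vadd w x) (vadd y z) = vadd (vadd w y) (vadd x z).
Proof. rewrite !vadd_assoc. f_equal. rewrite <- !vadd_assoc. f_equal. apply vadd_comm. Qed.

Lemma vopp_add x y : vopp (vadd x y) = vadd (vopp x) (vopp y).
Proof.
  symmetry. apply vopp_unique. rewrite vadd_swap4, !vadd_opp. apply vadd_0.
Qed.

Lemma vopp_zero : vopp (@vzero X) = vzero.
Proof. symmetry; apply vopp_unique, vadd_0. Qed.

Lemma vscal_C0 x : vscal C0 x = vzero.
Proof.
  apply (vadd_cancel_l (vscal C0 x)). rewrite vadd_0, <- vscal_distr_c.
  f_equal. unfold Cadd, C0; simpl; f_equal; ring.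
Qed.

Lemma vscal_zero c : vscal c (@vzero X) = vzero.
Proof.
  apply (vadd_cancel_l (vscal c vzero)). rewrite vadd_0, <- vscal_distr_v, vadd_0.
  reflexivity.
Qed.

Lemma vopp_scal x : vopp x = vscal (mkC (-1) 0) x.
Proof.
  symmetry; apply vopp_unique.
  rewrite <- (vscal_1 x) at 1. rewrite <- vscal_distr_c, <- (vscal_C0 x).
  f_equal. unfold Cadd, C0, C1; simpl; f_equal; ring.
Qed.

Lemma vsub_diag x : vsub x x = vzero.
Proof. apply vadd_opp. Qed.

Lemma vsub_add_add (w x y z : X) : vsub (vadd w x) (vadd y z) = vadd (vsub w y) (vsub x z).
Proof. unfold vsub. rewrite vopp_add. apply vadd_swap4. Qed.

Lemma vsub_chain x y z : vadd (vsub x y) (vsub y z) = vsub x z.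
Proof.
  unfold vsub. rewrite <- vadd_assoc, (vadd_assoc (vopp y)), vadd_oppl, vadd_0l.
  reflexivity.
Qed.

Lemma vsub_opp x y : vopp (vsub x y) = vsub y x.
Proof. unfold vsub. rewrite vopp_add, vopp_opp, vadd_comm. reflexivity. Qed.

Lemma vsub_eq0 x y : vsub x y = vzero -> x = y.
Proof.
  intros H. rewrite <- (vadd_0 x), <- (vadd_oppl y), vadd_assoc. fold (vsub x y).
  rewrite H, vadd_0l. reflexivity.
Qed.

Lemma vscal_Csub (c d : Cplx) x : vscal (Cadd c (Copp d)) x = vsub (vscal c x) (vscal d x).
Proof.
  rewrite vscal_distr_c. unfold vsub. f_equal.
  rewrite vopp_scal, vscal_assoc. f_equal. unfold Cmul, Copp; simpl; f_equal; ring.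
Qed.

Lemma vsum_S f n : vsum f (S n) = vadd (vsum f n) (f n).
Proof. reflexivity. Qed.

Lemma vsum_ext f h n : (forall k, (k < n)%nat -> f k = h k) -> vsum f n = vsum h n.
Proof.
  induction n; intros H; simpl; auto. rewrite IHn, H by (auto; lia). reflexivity.
Qed.

Lemma vsum_add f h n : vsum (fun k => vadd (f k) (h k)) n = vadd (vsum f n) (vsum h n).
Proof. induction n; simpl. { rewrite vadd_0; auto. } rewrite IHn. apply vadd_swap4. Qed.

Lemma vsum_scal c f n : vsum (fun k => vscal c (f k)) n = vscal c (vsum f n).
Proof. induction n; simpl. { rewrite vscal_zero; auto. } rewrite IHn, vscal_distr_v; auto. Qed.

Lemma vsum_sub f h n : vsum (fun k => vsub (f k) (h k)) n = vsub (vsum f n) (vsum h n).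
Proof.
  unfold vsub. rewrite vsum_add. f_equal.
  induction n; simpl. { rewrite vopp_zero; auto. } rewrite IHn, vopp_add; auto.
Qed.

Lemma vsum_zero n : vsum (fun _ => @vzero X) n = vzero.
Proof. induction n; simpl; auto. rewrite IHn, vadd_0; auto. Qed.

Lemma vsum_shift f n : vsum f (S n) = vadd (f O) (vsum (fun k => f (S k)) n).
Proof.
  induction n. { simpl. rewrite vadd_0l, vadd_0; auto. }
  rewrite vsum_S, IHn. simpl. rewrite vadd_assoc; auto.
Qed.

Lemma sn_zero i : sn i (@vzero X) = 0.
Proof. rewrite <- (vscal_C0 vzero), sn_homog. unfold C0. rewrite Cnorm_real, Rabs_R0. ring. Qed.

Lemma sn_opp i x : sn i (vopp x) = sn i x.
Proof.
  rewrite vopp_scal, sn_homog, Cnorm_real, Rabs_left by lra. ring.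
Qed.

Lemma sn_nonneg i x : 0 <= sn i x.
Proof. pose proof (sn_triangle i x (vopp x)). rewrite vadd_opp, sn_zero, sn_opp in H. lra. Qed.

Lemma sn_sub_tri i x y z : sn i (vsub x z) <= sn i (vsub x y) + sn i (vsub y z).
Proof. rewrite <- (vsub_chain x y z). apply sn_triangle. Qed.

Lemma sn_sub_le i x y : sn i (vsub x y) <= sn i x + sn i y.
Proof. unfold vsub. rewrite <- (sn_opp i y). apply sn_triangle. Qed.

Definition rs (r : R) (y : X) : X := vscal (mkC r 0) y.
Definition Jm (y : X) : X := vscal (mkC 0 1) y.

Lemma rs_add_r r s y : rs (r + s) y = vadd (rs r y) (rs s y).
Proof. unfold rs. rewrite <- vscal_distr_c. f_equal. unfold Cadd; simpl; f_equal; ring. Qed.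

Lemma rs_add_v r y z : rs r (vadd y z) = vadd (rs r y) (rs r z).
Proof. apply vscal_distr_v. Qed.

Lemma rs_rs r s y : rs r (rs s y) = rs (r * s) y.
Proof. unfold rs. rewrite vscal_assoc. f_equal. unfold Cmul; simpl; f_equal; ring. Qed.

Lemma rs_1 y : rs 1 y = y.
Proof. apply vscal_1. Qed.

Lemma rs_0 y : rs 0 y = vzero.
Proof. apply vscal_C0. Qed.

Lemma rs_opp y : rs (-1) y = vopp y.
Proof. unfold rs. rewrite vopp_scal. auto. Qed.

Lemma sn_rs i r y : sn i (rs r y) = Rabs r * sn i y.
Proof. unfold rs. rewrite sn_homog, Cnorm_real. auto. Qed.

Lemma sn_Jm i y : sn i (Jm y) = sn i y.
Proof.
  unfold Jm. rewrite sn_homog. unfold Cnorm; simpl.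
  replace (0 * 0 + 1 * 1) with 1 by ring. rewrite sqrt_1. ring.
Qed.

Lemma vscal_decomp (r s : R) (y : X) : vscal (mkC r s) y = vadd (rs r y) (rs s (Jm y)).
Proof.
  unfold rs, Jm. rewrite vscal_assoc, <- vscal_distr_c.
  f_equal. unfold Cadd, Cmul; simpl; f_equal; ring.
Qed.

Lemma Jm_rs r y : Jm (rs r y) = rs r (Jm y).
Proof. unfold Jm, rs. rewrite !vscal_assoc. f_equal. unfold Cmul; simpl; f_equal; ring. Qed.

Lemma Jm_Jm y : Jm (Jm y) = rs (-1) y.
Proof. unfold Jm, rs. rewrite vscal_assoc. f_equal. unfold Cmul; simpl; f_equal; ring. Qed.

Lemma Jm_add y z : Jm (vadd y z) = vadd (Jm y) (Jm z).
Proof. apply vscal_distr_v. Qed.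

End VectorAlgebra.

(** ** The Hahn–Banach theorem for a seminorm *)

Lemma zorn_prop (T : Type) (t0 : T) (le : T -> T -> Prop) :
  (forall t, le t t) -> (forall r s t, le r s -> le s t -> le r t) ->
  (forall A : T -> Prop, (forall s t, A s -> A t -> le s t \/ le t s) ->
     exists t, forall s, A s -> le s t) ->
  exists t, forall s, le t s -> le s t.
Proof.
  intros Hrefl Htrans Hchain.
  pose (leb := fun s t => boolp.asbool (le s t)).
  assert (Hleb : forall s t, le s t <-> leb s t = true).
  { intros s t. split; [apply ssrbool.introT | apply ssrbool.elimT]; apply boolp.asboolP. }
  destruct (@classical_sets.ZL_preorder T t0 leb) as [m Hm].
  - intros t. apply Hleb, Hrefl.
  - intros r s t H1 H2. apply Hleb. apply Hleb in H1, H2. eauto.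
  - intros A HA. destruct (Hchain A) as [t Ht].
    + intros s t Hs Ht. destruct (HA s t Hs Ht); [left | right]; apply Hleb; auto.
    + exists t. intros s Hs. apply Hleb; auto.
  - exists m. intros s Hs. apply Hleb, Hm, Hleb, Hs.
Qed.

Definition real_linear {X : LCS} (phi : X -> R) : Prop :=
  (forall y z, phi (vadd y z) = phi y + phi z) /\ (forall r y, phi (rs r y) = r * phi y).

Section HahnBanach.
Variable X : LCS.
Variable i : Idx X.
Implicit Types y z d : X.
Local Notation p := (sn i).
Variable e : X.
Hypothesis pe_pos : p e > 0.

(** Graphs of real-linear functionals on a subspace containing [e], dominated
    by [p] and attaining [p e] at [e]; these are ordered by inclusion. *)
Record PF (G : X -> R -> Prop) : Prop := {
  pf_fun : forall y r1 r2, G y r1 -> G y r2 -> r1 = r2;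
  pf_add : forall y1 y2 r1 r2, G y1 r1 -> G y2 r2 -> G (vadd y1 y2) (r1 + r2);
  pf_scal : forall y r k, G y r -> G (rs k y) (k * r);
  pf_dom : forall y r, G y r -> r <= p y;
  pf_base : G e (p e)
}.

Definition G0 (y : X) (r : R) : Prop := exists k, y = rs k e /\ r = k * p e.

Lemma PF_G0 : PF G0.
Proof.
  constructor.
  - intros y r1 r2 [k1 [-> ->]] [k2 [H ->]].
    assert (Hk : rs (k1 - k2) e = vzero).
    { unfold Rminus. rewrite rs_add_r, <- (Rmult_1_l k2), Ropp_mult_distr_l, <- rs_rs, H.
      rewrite rs_opp, vadd_opp. reflexivity. }
    apply (f_equal p) in Hk. rewrite sn_rs, sn_zero in Hk.
    destruct (Req_dec k1 k2) as [-> | Hne]; [reflexivity |].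
    pose proof (Rabs_pos_lt (k1 - k2)). assert (k1 - k2 <> 0) by lra. nra.
  - intros y1 y2 r1 r2 [k1 [-> ->]] [k2 [-> ->]].
    exists (k1 + k2). split; [rewrite rs_add_r | ring]; auto.
  - intros y r k [k1 [-> ->]]. exists (k * k1). split; [rewrite rs_rs | ring]; auto.
  - intros y r [k1 [-> ->]]. rewrite sn_rs.
    pose proof (Rle_abs k1). pose proof (sn_nonneg i e). nra.
  - exists 1. split; [rewrite rs_1 | ring]; auto.
Qed.

Definition PFT := { G : X -> R -> Prop | PF G }.
Definition PFle (s t : PFT) : Prop := forall y r, proj1_sig s y r -> proj1_sig t y r.

(** Every chain has an upper bound: the union of its graphs. *)
Lemma chain_ub (A : PFT -> Prop) :
  (forall s t, A s -> A t -> PFle s t \/ PFle t s) -> exists t, forall s, A s -> PFle s t.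
Proof.
  intros HA.
  destruct (classic (exists s0, A s0)) as [[s0 Hs0] | Hne].
  2: { exists (exist _ G0 PF_G0). intros s Hs. exfalso; eauto. }
  set (U := fun y r => exists s, A s /\ proj1_sig s y r).
  assert (HU : PF U).
  { constructor.
    - intros y r1 r2 [s [Hs H1]] [t [Ht H2]].
      destruct (HA s t Hs Ht) as [Hst | Hts].
      + apply (pf_fun _ (proj2_sig t) y); auto.
      + apply (pf_fun _ (proj2_sig s) y); auto.
    - intros y1 y2 r1 r2 [s [Hs H1]] [t [Ht H2]].
      destruct (HA s t Hs Ht) as [Hst | Hts].
      + exists t; split; auto. apply (pf_add _ (proj2_sig t)); auto.
      + exists s; split; auto. apply (pf_add _ (proj2_sig s)); auto.
    - intros y r k [s [Hs H1]]. exists s; split; auto. apply (pf_scal _ (proj2_sig s)); auto.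
    - intros y r [s [Hs H1]]. apply (pf_dom _ (proj2_sig s)); auto.
    - exists s0; split; auto. apply (pf_base _ (proj2_sig s0)). }
  exists (exist _ U HU). intros s Hs y r H. exists s; auto.
Qed.

Lemma dom_rescale (m r : R) (y : X) : m > 0 -> / m * r <= p (rs (/ m) y) -> r <= p y.
Proof.
  intros Hm H. rewrite sn_rs, Rabs_right in H by (apply Rle_ge, Rlt_le, Rinv_0_lt_compat; lra).
  apply Rmult_le_reg_l in H; auto. apply Rinv_0_lt_compat; lra.
Qed.

Section Extension.
Variable G : X -> R -> Prop.
Hypothesis HG : PF G.
Variable z : X.
Hypothesis Hz : forall r, ~ G z r.

Lemma G_zero : G vzero 0.
Proof.
  pose proof (pf_scal _ HG e (p e) 0 (pf_base _ HG)). rewrite rs_0, Rmult_0_l in H. auto.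
Qed.

Lemma G_sub d1 r1 d2 r2 : G d1 r1 -> G d2 r2 -> G (vsub d1 d2) (r1 - r2).
Proof.
  intros H1 H2. unfold vsub. rewrite <- rs_opp. replace (r1 - r2) with (r1 + (-1) * r2) by ring.
  apply (pf_add _ HG); auto. apply (pf_scal _ HG); auto.
Qed.

(** The admissible values of the extension at [z] form a nonempty interval. *)
Lemma ext_bound d1 r1 d2 r2 :
  G d1 r1 -> G d2 r2 -> r1 - p (vsub d1 z) <= p (vadd d2 z) - r2.
Proof.
  intros H1 H2. pose proof (pf_dom _ HG _ _ (pf_add _ HG _ _ _ _ H1 H2)) as Hd.
  assert (vadd d1 d2 = vadd (vsub d1 z) (vadd d2 z)).
  { unfold vsub. rewrite (vadd_comm d2 z), <- vadd_assoc, (vadd_assoc (vopp z)), vadd_oppl.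
    rewrite vadd_0l. reflexivity. }
  rewrite H in Hd. pose proof (sn_triangle i (vsub d1 z) (vadd d2 z)). lra.
Qed.

(** A value [c0] for the extension at [z], by completeness of [R]. *)
Lemma c_exists : { c : R | (forall d rd, G d rd -> rd - p (vsub d z) <= c) /\
                           (forall d rd, G d rd -> c <= p (vadd d z) - rd) }.
Proof.
  set (Sset := fun v => exists d rd, G d rd /\ v = rd - p (vsub d z)).
  assert (Hb : bound Sset).
  { exists (p (vadd vzero z) - 0). intros v [d [rd [H ->]]]. apply ext_bound; auto. apply G_zero. }
  assert (Hne : exists v, Sset v).
  { exists (0 - p (vsub vzero z)), vzero, 0. split; auto. apply G_zero. }
  destruct (completeness Sset Hb Hne) as [c [Hub Hlub]].
  exists c. split.
  - intros d rd H. apply Hub. exists d, rd; auto.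
  - intros d rd H. apply Hlub. intros v [d1 [r1 [H1 ->]]]. apply ext_bound; auto.
Qed.

Definition c0 := proj1_sig c_exists.

Definition Gext (y : X) (r : R) : Prop :=
  exists d rd k, G d rd /\ y = vadd d (rs k z) /\ r = rd + k * c0.

Lemma decomp_eq d k d' k' : vadd d (rs k z) = vadd d' (rs k' z) -> vsub d' d = rs (k - k') z.
Proof.
  intros H.
  assert (E1 : vsub d' d = vsub (vadd d' (rs k' z)) (vadd d (rs k' z))).
  { rewrite vsub_add_add, vsub_diag, vadd_0. auto. }
  rewrite E1, <- H, vsub_add_add, vsub_diag, vadd_0l. unfold vsub.
  rewrite <- rs_opp, rs_rs, <- rs_add_r. f_equal. ring.
Qed.

(** The extension is still dominated by [p]: this is where the choice of [c0] matters. *)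
Lemma Gext_dom y r : Gext y r -> r <= p y.
Proof.
  destruct (proj2_sig c_exists) as [Hlo Hhi]. fold c0 in Hlo, Hhi.
  intros [d [rd [k [H [-> ->]]]]].
  destruct (Rtotal_order k 0) as [Hk | [-> | Hk]].
  - (* rescale by [1/(-k)] and use the lower bound for [c0] *)
    apply (dom_rescale (- k)); [lra |].
    pose proof (Hlo _ _ (pf_scal _ HG _ _ (/ - k) H)) as Hl.
    replace (rs (/ - k) (vadd d (rs k z))) with (vsub (rs (/ - k) d) z).
    { replace (/ - k * (rd + k * c0)) with (/ - k * rd - c0) by (field; lra). lra. }
    rewrite rs_add_v, rs_rs. unfold vsub. rewrite <- rs_opp. do 2 f_equal. field. lra.
  - rewrite rs_0, vadd_0, Rmult_0_l, Rplus_0_r. apply (pf_dom _ HG); auto.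
  - (* rescale by [1/k] and use the upper bound for [c0] *)
    apply (dom_rescale k); [lra |].
    pose proof (Hhi _ _ (pf_scal _ HG _ _ (/ k) H)) as Hh.
    replace (rs (/ k) (vadd d (rs k z))) with (vadd (rs (/ k) d) z).
    { replace (/ k * (rd + k * c0)) with (/ k * rd + c0) by (field; lra). lra. }
    rewrite rs_add_v, rs_rs. replace (/ k * k) with 1 by (field; lra). rewrite rs_1; auto.
Qed.

Lemma PF_Gext : PF Gext.
Proof.
  constructor.
  - intros y r1 r2 [d [rd [k [Hd [-> ->]]]]] [d' [rd' [k' [Hd' [Heq ->]]]]].
    pose proof (decomp_eq _ _ _ _ Heq) as E.
    destruct (Req_dec (k - k') 0) as [Hk | Hk].
    + rewrite Hk, rs_0 in E. apply vsub_eq0 in E. subst d'.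
      rewrite (pf_fun _ HG _ _ _ Hd Hd'). replace k' with k by lra. reflexivity.
    + (* otherwise [z] would already lie in the domain of [G] *)
      exfalso. apply (Hz (/ (k - k') * (rd' - rd))).
      replace z with (rs (/ (k - k')) (vsub d' d)).
      { apply (pf_scal _ HG), G_sub; auto. }
      rewrite E, rs_rs, Rinv_l by auto. apply rs_1.
  - intros y1 y2 r1 r2 [d1 [rd1 [k1 [H1 [-> ->]]]]] [d2 [rd2 [k2 [H2 [-> ->]]]]].
    exists (vadd d1 d2), (rd1 + rd2), (k1 + k2). split; [apply (pf_add _ HG); auto |].
    split; [rewrite vadd_swap4, rs_add_r; auto | ring].
  - intros y r m [d [rd [k [H [-> ->]]]]]. exists (rs m d), (m * rd), (m * k).
    split; [apply (pf_scal _ HG); auto |]. split; [rewrite rs_add_v, rs_rs; auto | ring].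
  - apply Gext_dom.
  - exists e, (p e), 0. split; [apply (pf_base _ HG) |].
    split; [rewrite rs_0, vadd_0 | ring]; auto.
Qed.

Lemma Gext_ext y r : G y r -> Gext y r.
Proof. intros H. exists y, r, 0. split; auto. split; [rewrite rs_0, vadd_0 | ring]; auto. Qed.

Lemma Gext_z : Gext z c0.
Proof. exists vzero, 0, 1. split; [apply G_zero |]. split; [rewrite rs_1, vadd_0l | ring]; auto. Qed.

End Extension.

(** Hahn–Banach: a maximal element (Zorn) is defined everywhere, since it
    could otherwise be extended. *)
Lemma real_HB : exists phi : X -> R,
  real_linear phi /\ (forall y, phi y <= p y) /\ phi e = p e.
Proof.
  destruct (zorn_prop PFT (exist _ G0 PF_G0) PFle) as [[G HG] Hmax].
  - intros t y r; auto.
  - intros r s t H1 H2 y v H. auto.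
  - apply chain_ub.
  - assert (Hdom : forall y, exists r, G y r).
    { intros y. apply NNPP. intros Hn.
      assert (Hz : forall r, ~ G y r) by (intros r Hr; apply Hn; eauto).
      apply (Hz (c0 G HG y)).
      apply (Hmax (exist _ (Gext G HG y) (PF_Gext G HG y Hz))).
      - intros w v Hw. apply Gext_ext; auto.
      - apply Gext_z. }
    destruct (choice G Hdom) as [phi Hphi].
    exists phi. split; [split |]; [intros | intros | split].
    + apply (pf_fun _ HG (vadd y z)); auto. apply (pf_add _ HG); auto.
    + apply (pf_fun _ HG (rs r y)); auto. apply (pf_scal _ HG); auto.
    + intros. apply (pf_dom _ HG); auto.
    + apply (pf_fun _ HG e); auto. apply (pf_base _ HG).
Qed.

End HahnBanach.

Section Dual.
Context {X : LCS}.

Lemma real_linear_abs_dom (phi : X -> R) (i : Idx X) :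
  real_linear phi -> (forall y, phi y <= sn i y) -> forall y, Rabs (phi y) <= sn i y.
Proof.
  intros [_ Hs] Hd y. pose proof (Hd (rs (-1) y)) as Hn.
  rewrite Hs, sn_rs, Rabs_left in Hn by lra.
  pose proof (Hd y). unfold Rabs. destruct (Rcase_abs (phi y)); lra.
Qed.

Lemma lin_sub (f : X -> Cplx) :
  is_linear_functional X f -> forall x y, f (vsub y x) = Cadd (f y) (Copp (f x)).
Proof.
  intros [Ha Hs] x y. unfold vsub. rewrite Ha, vopp_scal, Hs.
  f_equal. unfold Cmul, Copp; simpl. f_equal; ring.
Qed.

Lemma dual_of_bound (f : X -> Cplx) (i : Idx X) (K : R) :
  is_linear_functional X f -> 0 <= K -> (forall y, Cnorm (f y) <= K * sn i y) -> in_dual X f.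
Proof.
  intros Hl HK Hb. split; auto. intros x eps Heps.
  exists (i :: nil), (eps / (K + 1)). split; [apply Rdiv_lt_0_compat; lra |].
  intros y Hy. rewrite <- lin_sub by auto.
  specialize (Hy i (or_introl eq_refl)). pose proof (Hb (vsub y x)).
  pose proof (sn_nonneg i (vsub y x)).
  assert (K * sn i (vsub y x) <= K * (eps / (K + 1))) by (apply Rmult_le_compat_l; lra).
  assert (K * (eps / (K + 1)) < eps).
  { apply (Rmult_lt_reg_r (K + 1)); [lra |]. field_simplify; lra. }
  lra.
Qed.

(** Complexification: a dominated real-linear functional is the real part of
    a continuous complex-linear functional, namely [y |-> phi y - i phi (i y)]. *)
Lemma complexify (phi : X -> R) (i : Idx X) (K : R) :
  real_linear phi -> 0 <= K -> (forall y, Rabs (phi y) <= K * sn i y) ->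
  exists f, in_dual X f /\ forall y, Re (f y) = phi y.
Proof.
  intros [Hadd Hsc] HK Hdom.
  set (f := fun y => mkC (phi y) (- phi (Jm y))).
  assert (Hlin : is_linear_functional X f).
  { split.
    - intros y z. unfold f, Cadd; simpl. rewrite Jm_add, !Hadd. f_equal; ring.
    - intros [r s] y. unfold f, Cmul; simpl.
      rewrite vscal_decomp, Jm_add, !Jm_rs, Jm_Jm, !Hadd, !Hsc. f_equal; ring. }
  exists f. split; [| reflexivity].
  apply (dual_of_bound f i K Hlin HK). intros y.
  destruct (Req_dec (Cnorm (f y)) 0) as [H0 | H0].
  { rewrite H0. pose proof (sn_nonneg i y). nra. }
  (* rotate [y] by the conjugate phase of [f y]: then [f] takes the real value [|f y|] *)
  set (N := Cnorm (f y)).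
  assert (HN : 0 < N) by (pose proof (Cnorm_nonneg (f y)); unfold N in *; lra).
  assert (HN2 : phi y ^ 2 + phi (Jm y) ^ 2 = N ^ 2).
  { unfold N, Cnorm. simpl. rewrite !Rmult_1_r, sqrt_sqrt; nra. }
  set (th := mkC (Re (f y) / N) (- Im (f y) / N)).
  assert (Hth : Cnorm th = 1).
  { unfold Cnorm, th; simpl. rewrite <- sqrt_1. f_equal.
    field_simplify; [| lra]. rewrite HN2. field. lra. }
  assert (HRe : Re (f (vscal th y)) = N).
  { rewrite (proj2 Hlin). unfold th, Cmul; simpl. field_simplify; [| lra].
    rewrite HN2. field. lra. }
  pose proof (Hdom (vscal th y)) as Hd. change (phi (vscal th y)) with (Re (f (vscal th y))) in Hd.
  rewrite HRe, sn_homog, Hth, Rmult_1_l in Hd. fold N. pose proof (Rle_abs N). lra.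
Qed.

(** A relatively weakly compact set is weakly bounded: cover it by the
    weakly open sets [{|f| < n}]. *)
Lemma weak_bounded (E : X -> Prop) : relatively_weakly_compact X E ->
  forall f, in_dual X f -> exists M, forall e, E e -> Cnorm (f e) <= M.
Proof.
  intros Hc f Hf.
  destruct (Hc nat (fun n y => Cnorm (f y) < INR n)) as [l Hl].
  - intros n x Hx. exists (f :: nil), (INR n - Cnorm (f x)). split.
    { intros h [<- | []]; auto. }
    split; [lra |].
    intros y Hy. specialize (Hy f (or_introl eq_refl)).
    assert (Hfy : f y = Cadd (f x) (Cadd (f y) (Copp (f x)))).
    { unfold Cadd, Copp; simpl. destruct (f y); simpl; f_equal; ring. }
    rewrite Hfy. pose proof (Cnorm_triangle (f x) (Cadd (f y) (Copp (f x)))). lra.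
  - intros x _. destruct (INR_unbounded (Cnorm (f x))) as [n Hn]. exists n. lra.
  - exists (INR (fold_right Nat.max 0%nat l)). intros e He.
    destruct (Hl e) as [j [Hj Hlt]]. { intros U _ HU. exists e; auto. }
    assert (Hle : (j <= fold_right Nat.max 0 l)%nat).
    { clear -Hj. induction l as [| j' l IH]; simpl in *; [destruct Hj |].
      destruct Hj as [-> | Hj]; [lia | specialize (IH Hj); lia]. }
    apply le_INR in Hle. lra.
Qed.

Lemma real_weak_bounded (E : X -> Prop) (i : Idx X) (phi : X -> R) (K : R) :
  relatively_weakly_compact X E -> real_linear phi -> 0 <= K ->
  (forall y, Rabs (phi y) <= K * sn i y) -> exists M, forall e, E e -> Rabs (phi e) <= M.
Proof.
  intros Hc Hl HK Hd. destruct (complexify phi i K Hl HK Hd) as [f [Hf HRe]].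
  destruct (weak_bounded E Hc f Hf) as [M HM]. exists M. intros e He.
  rewrite <- HRe. pose proof (Re_le_Cnorm (f e)). pose proof (HM e He). lra.
Qed.

End Dual.

(** ** Weakly bounded sets are bounded (gliding hump) *)

Lemma geometric_domination (a : nat -> R) (M : R) :
  (forall k, Rabs (a k) <= M * (/ 4) ^ k) -> ex_series a /\ Rabs (Series a) <= M * (4 / 3).
Proof.
  intros H.
  assert (Hq : Rabs (/ 4) < 1) by (rewrite Rabs_right; lra).
  assert (Hg : ex_series (fun k => M * (/ 4) ^ k)).
  { apply (@ex_series_scal_l R_AbsRing R_NormedModule M (fun k => (/ 4) ^ k)).
    apply ex_series_geom; auto. }
  assert (Hsum : Series (fun k => M * (/ 4) ^ k) = M * (4 / 3)).
  { rewrite Series_scal_l, Series_geom by auto. field. }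
  assert (Habs : ex_series (fun k => Rabs (a k))).
  { apply (@ex_series_le R_AbsRing R_CompleteNormedModule (fun k => Rabs (a k))
      (fun k => M * (/ 4) ^ k)); [| exact Hg].
    intros k. apply (Rle_trans _ _ _ (Req_le _ _ (Rabs_Rabsolu _)) (H k)). }
  split.
  - exact (@ex_series_le R_AbsRing R_CompleteNormedModule a _ H Hg).
  - rewrite <- Hsum. eapply Rle_trans; [apply Series_Rabs; auto |].
    apply Series_le; auto. intros k. split; [apply Rabs_pos | apply H].
Qed.

Fixpoint psum (a : nat -> R) (m : nat) : R :=
  match m with O => 0 | S m => psum a m + a m end.

Lemma sum_f_psum a n : sum_f_R0 a n = psum a (S n).
Proof. induction n; simpl; [ring |]. rewrite IHn. simpl. ring. Qed.

(** Suppose [E] is bounded for every dominated real functional but unbounded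
    for the seminorm [p]. Pick [e_n ∈ E] with [p e_n] huge, Hahn–Banach
    functionals [phi_n] norming [e_n], and form [Phi = sum_k 4^-k phi_k]:
    the term [4^-n phi_n e_n] dominates [Phi e_n], which is therefore
    unbounded on [E], a contradiction. *)
Section GlidingHump.
Context {X : LCS}.
Variable E : X -> Prop.
Variable i : Idx X.
Local Notation p := (sn i).

Hypothesis weakly_bdd : forall phi K, real_linear phi -> 0 <= K ->
  (forall y, Rabs (phi y) <= K * p y) -> exists M, forall e, E e -> Rabs (phi e) <= M.

Variable pick : R -> X.
Hypothesis pick_spec : forall B, E (pick B) /\ p (pick B) > B.
Variable norming : X -> X -> R.
Hypothesis norming_spec : forall e, p e > 0 ->
  real_linear (norming e) /\ (forall y, Rabs (norming e y) <= p y) /\ norming e e = p e.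
Variable bound_on_E : (X -> R) -> R.
Hypothesis bound_on_E_spec : forall phi, 0 <= bound_on_E phi /\
  (real_linear phi -> (forall y, Rabs (phi y) <= p y) ->
   forall e, E e -> Rabs (phi e) <= bound_on_E phi).

Definition cc (k : nat) : R := (/ 4) ^ k.
Definition target (m : nat) (A : R) : R := 2 * 4 ^ m * (INR m + 1 + A).

(** [acc n] bounds the first [n] terms of [Phi] on [E]. *)
Fixpoint acc (n : nat) : R :=
  match n with
  | O => 0
  | S m => acc m + cc m * bound_on_E (norming (pick (target m (acc m))))
  end.

Definition en (n : nat) : X := pick (target n (acc n)).
Definition phin (n : nat) : X -> R := norming (en n).

Lemma cc_pos k : 0 < cc k.
Proof. apply pow_lt. lra. Qed.

Lemma acc_nonneg n : 0 <= acc n.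
Proof.
  induction n; simpl; [lra |].
  pose proof (cc_pos n). pose proof (proj1 (bound_on_E_spec (norming (pick (target n (acc n)))))).
  nra.
Qed.

Lemma phin_spec n :
  real_linear (phin n) /\ (forall y, Rabs (phin n y) <= p y) /\ phin n (en n) = p (en n).
Proof.
  apply norming_spec. destruct (pick_spec (target n (acc n))) as [_ H]. fold (en n) in H.
  unfold target in H. pose proof (acc_nonneg n). pose proof (pos_INR n).
  pose proof (pow_le 4 n). nra.
Qed.

Lemma term_dom n y : Rabs (cc n * phin n y) <= p y * (/ 4) ^ n.
Proof.
  rewrite Rabs_mult, (Rabs_right (cc n)) by (apply Rle_ge, Rlt_le, cc_pos).
  pose proof (proj1 (proj2 (phin_spec n)) y). pose proof (cc_pos n). unfold cc in *. nra.
Qed.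

Definition Phi (y : X) : R := Series (fun k => cc k * phin k y).

Lemma Phi_series y : ex_series (fun k => cc k * phin k y) /\ Rabs (Phi y) <= p y * (4 / 3).
Proof. apply geometric_domination. intros k. apply term_dom. Qed.

Lemma Phi_linear : real_linear Phi.
Proof.
  assert (Hex : forall y, ex_series (fun k => cc k * phin k y)) by apply Phi_series.
  split.
  - intros y z. unfold Phi. rewrite <- Series_plus by auto. apply Series_ext. intros k.
    rewrite (proj1 (proj1 (phin_spec k))). ring.
  - intros r y. unfold Phi. rewrite <- Series_scal_l. apply Series_ext. intros k.
    rewrite (proj2 (proj1 (phin_spec k))). ring.
Qed.

Lemma Phi_dom y : Rabs (Phi y) <= 4 / 3 * p y.
Proof.
  rewrite Rmult_comm. apply Phi_series.
Qed.

Lemma head_bound m e : E e -> Rabs (psum (fun k => cc k * phin k e) m) <= acc m.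
Proof.
  intros He. induction m; simpl; [rewrite Rabs_R0; lra |].
  eapply Rle_trans; [apply Rabs_triang |].
  rewrite Rabs_mult, (Rabs_right (cc m)) by (apply Rle_ge, Rlt_le, cc_pos).
  destruct (phin_spec m) as [Hl [Hd _]].
  pose proof (proj2 (bound_on_E_spec (phin m)) Hl Hd e He). pose proof (cc_pos m).
  unfold phin, en in *. nra.
Qed.

Lemma Phi_large n : Phi (en n) > INR n + 1.
Proof.
  unfold Phi. set (a := fun k => cc k * phin k (en n)).
  assert (Hex : ex_series a) by apply Phi_series.
  rewrite (Series_incr_n a (S n)) by (lia || auto). simpl pred. rewrite sum_f_psum. simpl psum.
  pose proof (head_bound n (en n) (proj1 (pick_spec _))) as Hhead. fold a in Hhead.
  assert (Hn : a n = cc n * p (en n)) by (unfold a; rewrite (proj2 (proj2 (phin_spec n))); auto).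
  assert (Htail : Rabs (Series (fun k => a (S n + k)%nat)) <= cc n * / 4 * p (en n) * (4 / 3)).
  { apply geometric_domination. intros k. unfold a, cc.
    rewrite pow_add, Rabs_mult, (Rabs_right ((/ 4) ^ (S n) * (/ 4) ^ k))
      by (apply Rle_ge, Rmult_le_pos; apply pow_le; lra).
    replace ((/ 4) ^ n * / 4 * p (en n) * (/ 4) ^ k)
      with ((/ 4) ^ (S n) * (/ 4) ^ k * p (en n)) by (simpl; ring).
    apply Rmult_le_compat_l; [apply Rmult_le_pos; apply pow_le; lra |].
    apply (proj1 (proj2 (phin_spec (S n + k))) (en n)). }
  assert (Hbig : cc n * p (en n) > 2 * (INR n + 1 + acc n)).
  { pose proof (proj2 (pick_spec (target n (acc n)))) as Hs. fold (en n) in Hs.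
    unfold target in Hs.
    assert (Hcc : cc n * 4 ^ n = 1).
    { unfold cc. rewrite <- Rpow_mult_distr, Rinv_l, pow1; lra. }
    pose proof (cc_pos n).
    apply (Rmult_lt_compat_l (cc n)) in Hs; auto.
    replace (cc n * (2 * 4 ^ n * (INR n + 1 + acc n)))
      with (2 * (INR n + 1 + acc n) * (cc n * 4 ^ n)) in Hs by ring.
    rewrite Hcc in Hs. lra. }
  apply Rabs_le_inv in Hhead. apply Rabs_le_inv in Htail. pose proof (acc_nonneg n).
  rewrite Hn. lra.
Qed.

(** But [Phi] is bounded on [E] by hypothesis. *)
Lemma gliding_hump : False.
Proof.
  destruct (weakly_bdd Phi (4 / 3) Phi_linear ltac:(lra) Phi_dom) as [M HM].
  destruct (INR_unbounded M) as [n Hn].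
  pose proof (HM _ (proj1 (pick_spec (target n (acc n))))). fold (en n) in H.
  pose proof (Phi_large n). pose proof (Rle_abs (Phi (en n))). lra.
Qed.

End GlidingHump.

(** Mackey's theorem for the sets at hand: bounded for every dominated real
    functional implies bounded for every seminorm. *)
Lemma bounded_of_weakly_bounded {X : LCS} (E : X -> Prop) (i : Idx X) :
  (forall phi K, real_linear phi -> 0 <= K ->
     (forall y, Rabs (phi y) <= K * sn i y) -> exists M, forall e, E e -> Rabs (phi e) <= M) ->
  exists B, forall e, E e -> sn i e <= B.
Proof.
  intros Hwb. apply NNPP. intros Hunb.
  assert (Hpick : forall B, exists e, E e /\ sn i e > B).
  { intros B. apply NNPP. intros Hn. apply Hunb. exists B. intros e He.
    apply Rnot_lt_le. intros Hlt. apply Hn. exists e. auto. }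
  destruct (choice _ Hpick) as [pick Hpick_spec].
  assert (Hnorm : forall e : X, exists phi, sn i e > 0 ->
    real_linear phi /\ (forall y, Rabs (phi y) <= sn i y) /\ phi e = sn i e).
  { intros e. destruct (classic (sn i e > 0)) as [He | He].
    - destruct (real_HB X i e He) as [phi [Hl [Hd Hphi]]].
      exists phi. intros _. split; [| split]; auto. apply real_linear_abs_dom; auto.
    - exists (fun _ => 0). intros; contradiction. }
  destruct (choice _ Hnorm) as [norming Hnorming].
  assert (Hbound : forall phi : X -> R, exists M, 0 <= M /\ (real_linear phi ->
    (forall y, Rabs (phi y) <= sn i y) -> forall e, E e -> Rabs (phi e) <= M)).
  { intros phi. destruct (classic (real_linear phi /\ forall y, Rabs (phi y) <= sn i y))
      as [[Hl Hd] | Hn].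
    - destruct (Hwb phi 1 Hl ltac:(lra)) as [M HM].
      { intros y. rewrite Rmult_1_l. auto. }
      exists (Rmax M 0). split; [apply Rmax_r |]. intros _ _ e He.
      pose proof (HM e He). pose proof (Rmax_l M 0). lra.
    - exists 0. split; [lra |]. intros Hl Hd. exfalso; auto. }
  destruct (choice _ Hbound) as [bound_on_E Hbound_spec].
  exact (gliding_hump E i Hwb pick Hpick_spec norming Hnorming bound_on_E Hbound_spec).
Qed.

(** ** Sums of increments over a monotone chain *)

Definition mono (u : nat -> R) (m : nat) : Prop := forall k, (k < m)%nat -> u k <= u (S k).

Lemma mono_le u m : mono u m -> forall k1 k2, (k1 <= k2 <= m)%nat -> u k1 <= u k2.
Proof.
  intros H k1 k2 [H1 H2]. induction k2 as [| k2 IH].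
  { replace k1 with 0%nat by lia. lra. }
  destruct (Nat.eq_dec k1 (S k2)) as [-> | Hne]; [lra |].
  pose proof (H k2 ltac:(lia)). assert (u k1 <= u k2) by (apply IH; lia). lra.
Qed.

Lemma mono_in u m a b : mono u m -> u O = a -> u m = b -> forall k, (k <= m)%nat -> a <= u k <= b.
Proof.
  intros Hm H0 Hn k Hk. pose proof (mono_le u m Hm 0 k ltac:(lia)).
  pose proof (mono_le u m Hm k m ltac:(lia)). lra.
Qed.

Section Semivariation.
Context {X : LCS}.
Variable x : R -> X.
Variable a : R.

Definition pair_incr (t : nat -> R) (k : nat) : X :=
  vsub (x (t (2 * k + 2)%nat)) (x (t (2 * k + 1)%nat)).

Lemma Eab_mono c c' e : c <= c' -> Eab X x a c e -> Eab X x a c' e.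
Proof.
  intros Hc [n [t [Hn [Ha [Hinc [Hb He]]]]]].
  exists n, t. repeat split; auto. lra.
Qed.

Lemma pair_sum_ext (t t' : nat -> R) n :
  (forall k, (k <= 2 * n)%nat -> t' k = t k) -> vsum (pair_incr t') n = vsum (pair_incr t) n.
Proof. intros H. apply vsum_ext. intros k Hk. unfold pair_incr. rewrite !H by lia. auto. Qed.

Lemma Eab_append p q n t : (n >= 1)%nat -> a <= t 1%nat ->
  (forall k, (1 <= k < 2 * n)%nat -> t k < t (S k)) -> t (2 * n)%nat < p -> p < q ->
  Eab X x a q (vadd (vsum (pair_incr t) n) (vsub (x q) (x p))).
Proof.
  intros Hn Ha Hinc Hlt Hpq.
  set (t' := fun k => if Nat.eqb k (2 * n + 1) then p
                      else if Nat.eqb k (2 * n + 2) then q else t k).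
  assert (Ht' : forall k, (k <= 2 * n)%nat -> t' k = t k).
  { intros k Hk. unfold t'. destruct (Nat.eqb_spec k (2 * n + 1)); [lia |].
    destruct (Nat.eqb_spec k (2 * n + 2)); [lia | auto]. }
  assert (Hp : t' (2 * n + 1)%nat = p) by (unfold t'; rewrite Nat.eqb_refl; auto).
  assert (Hq : t' (2 * n + 2)%nat = q).
  { unfold t'. destruct (Nat.eqb_spec (2 * n + 2) (2 * n + 1)); [lia |].
    rewrite Nat.eqb_refl. auto. }
  exists (S n), t'. repeat split; try lia.
  - rewrite Ht' by lia. auto.
  - intros k Hk.
    destruct (Nat.lt_ge_cases k (2 * n)) as [Hs | Hs].
    { rewrite !Ht' by lia. apply Hinc. lia. }
    destruct (Nat.eq_dec k (2 * n)) as [-> | Hk'].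
    { replace (S (2 * n)) with (2 * n + 1)%nat by lia. rewrite Hp, Ht' by lia. lra. }
    replace k with (2 * n + 1)%nat by lia.
    replace (S (2 * n + 1)) with (2 * n + 2)%nat by lia. rewrite Hp, Hq. lra.
  - replace (2 * S n)%nat with (2 * n + 2)%nat by lia. rewrite Hq. lra.
  - symmetry. change (vsum (pair_incr t') (S n) = vadd (vsum (pair_incr t) n) (vsub (x q) (x p))).
    rewrite vsum_S, (pair_sum_ext t t') by exact Ht'. unfold pair_incr at 2.
    rewrite Hp, Hq. reflexivity.
Qed.

Lemma Eab_stretch q n t : (n >= 1)%nat -> a <= t 1%nat ->
  (forall k, (1 <= k < 2 * n)%nat -> t k < t (S k)) -> t (2 * n)%nat < q ->
  Eab X x a q (vadd (vsum (pair_incr t) n) (vsub (x q) (x (t (2 * n)%nat)))).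
Proof.
  intros Hn Ha Hinc Hlt. destruct n as [| n]; [lia |].
  set (t' := fun k => if Nat.eqb k (2 * S n) then q else t k).
  assert (Ht' : forall k, (k < 2 * S n)%nat -> t' k = t k).
  { intros k Hk. unfold t'. destruct (Nat.eqb_spec k (2 * S n)); [lia | auto]. }
  assert (Hq : t' (2 * S n)%nat = q) by (unfold t'; rewrite Nat.eqb_refl; auto).
  exists (S n), t'. repeat split; try lia.
  - rewrite Ht' by lia. auto.
  - intros k Hk. destruct (Nat.eq_dec (S k) (2 * S n)) as [Hk' | Hk'].
    { rewrite Hk', Hq, Ht' by lia. pose proof (Hinc k Hk). rewrite Hk' in *. lra. }
    rewrite !Ht' by lia. apply Hinc. lia.
  - rewrite Hq. lra.
  - symmetry.
    change (vsum (pair_incr t') (S n)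
            = vadd (vsum (pair_incr t) (S n)) (vsub (x q) (x (t (2 * S n)%nat)))).
    rewrite !vsum_S, (pair_sum_ext t t') by (intros; apply Ht'; lia).
    rewrite <- vadd_assoc. f_equal. unfold pair_incr.
    replace (2 * n + 2)%nat with (2 * S n)%nat by lia.
    rewrite Hq, Ht' by lia. rewrite vadd_comm. apply eq_sym, vsub_chain.
Qed.

(** Adding the increment over [[p,q]] to an element of [E(a,p) ∪ {0}] gives an
    element of [E(a,q)]: either a new interval is appended, or the last
    interval (if it ends at [p]) is stretched to [q]. *)
Lemma Eab_add_increment p q e : a <= p -> p < q ->
  e = vzero \/ Eab X x a p e -> Eab X x a q (vadd e (vsub (x q) (x p))).
Proof.
  intros Hap Hpq [-> | [n [t [Hn [Ha [Hinc [Hend ->]]]]]]].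
  - exists 1%nat, (fun k => if Nat.eqb k 1 then p else q).
    split; [lia |]. split; [simpl; lra |]. split.
    { intros k Hk. replace k with 1%nat by lia. simpl. lra. }
    split; [simpl; lra |]. simpl. reflexivity.
  - destruct (Rle_lt_or_eq_dec _ _ Hend) as [Hlt | <-].
    + apply Eab_append; auto.
    + apply Eab_stretch; auto.
Qed.

Definition incr (u : nat -> R) (k : nat) : X := vsub (x (u (S k))) (x (u k)).

Definition selected_sum (u : nat -> R) (sel : nat -> bool) (m : nat) : X :=
  vsum (fun k => if sel k then incr u k else vzero) m.

Lemma selected_sum_in_E (u : nat -> R) (sel : nat -> bool) m : a <= u O -> mono u m ->
  selected_sum u sel m = vzero \/ Eab X x a (u m) (selected_sum u sel m).
Proof.
  intros Ha. induction m as [| m IH]; intros Hm; [left; reflexivity |].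
  assert (Hum : u m <= u (S m)) by (apply Hm; lia).
  assert (Hau : a <= u m) by (pose proof (mono_le u (S m) Hm 0 m ltac:(lia)); lra).
  assert (Hprev : selected_sum u sel m = vzero \/ Eab X x a (u m) (selected_sum u sel m))
    by (apply IH; intros k Hk; apply Hm; lia).
  unfold selected_sum. rewrite vsum_S. fold (selected_sum u sel m).
  destruct (sel m); [destruct (Rle_lt_or_eq_dec _ _ Hum) as [Hlt | Heq] |].
  - right. apply Eab_add_increment; auto.
  - unfold incr. rewrite <- Heq, vsub_diag, vadd_0.
    destruct Hprev; auto.
  - rewrite vadd_0. destruct Hprev as [H0 | HE]; [left; auto | right].
    apply (Eab_mono (u m)); auto.
Qed.

End Semivariation.

Section SignedCombinations.
Context {X : LCS}.
Variable i : Idx X.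

(** [y + c v] is a convex combination of [y - v] and [y + v] when [|c| <= 1]. *)
Lemma convex_identity (y v : X) (c : R) :
  vadd y (rs c v) = vadd (rs ((1 - c) / 2) (vadd y (vopp v))) (rs ((1 + c) / 2) (vadd y v)).
Proof.
  rewrite !rs_add_v, <- rs_opp, rs_rs, vadd_swap4, <- !rs_add_r.
  replace ((1 - c) / 2 + (1 + c) / 2) with 1 by field. rewrite rs_1. do 2 f_equal. field.
Qed.

Lemma signed_sums_bound (v : nat -> X) (M : R) m : forall w,
  (forall sgn : nat -> bool,
     sn i (vadd w (vsum (fun k => if sgn k then v k else vopp (v k)) m)) <= M) ->
  forall c, (forall k, (k < m)%nat -> -1 <= c k <= 1) ->
  sn i (vadd w (vsum (fun k => rs (c k) (v k)) m)) <= M.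
Proof.
  induction m as [| m IH]; intros w Hw c Hc; [apply (Hw (fun _ => true)) |].
  set (S := vsum (fun k => rs (c k) (v k)) m).
  assert (Hc' : forall k, (k < m)%nat -> -1 <= c k <= 1) by (intros; apply Hc; lia).
  assert (Hmove : forall q, vadd (vadd w S) q = vadd (vadd w q) S).
  { intros q. rewrite <- !vadd_assoc, (vadd_comm S q). auto. }
  (* the induction hypothesis, applied with [± v_m] absorbed into [w] *)
  assert (Hsign : forall b : bool, sn i (vadd (vadd w (if b then v m else vopp (v m))) S) <= M).
  { intros b. apply IH; auto. intros sgn.
    set (sgn' := fun k => if Nat.eqb k m then b else sgn k).
    eapply Rle_trans; [| apply (Hw sgn')]. right. f_equal.
    rewrite vsum_S. unfold sgn' at 2. rewrite Nat.eqb_refl.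
    rewrite (vsum_ext (fun k => if sgn' k then v k else vopp (v k))
                      (fun k => if sgn k then v k else vopp (v k))).
    - rewrite (vadd_comm (vsum _ m)), vadd_assoc. reflexivity.
    - intros k Hk. unfold sgn'. destruct (Nat.eqb_spec k m); [lia | auto]. }
  assert (Hcm : -1 <= c m <= 1) by (apply Hc; lia).
  rewrite vsum_S. fold S. rewrite vadd_assoc, (convex_identity (vadd w S) (v m) (c m)), !Hmove.
  eapply Rle_trans; [apply sn_triangle |]. rewrite !sn_rs.
  rewrite (Rabs_right ((1 - c m) / 2)), (Rabs_right ((1 + c m) / 2)) by lra.
  pose proof (Hsign false). pose proof (Hsign true). simpl in *. nra.
Qed.

End SignedCombinations.

Section CoefficientBounds.
Context {X : LCS}.
Variable x : R -> X.
Variables a b : R.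
Variable i : Idx X.
Variable B : R.
Hypothesis B_nonneg : 0 <= B.
Hypothesis E_bounded : forall e, Eab X x a b e -> sn i e <= B.

Variable u : nat -> R.
Variable m : nat.
Hypothesis u_mono : mono u m.
Hypothesis u_start : a <= u O.
Hypothesis u_end : u m <= b.

Lemma selected_sum_bound sel : sn i (selected_sum x u sel m) <= B.
Proof.
  destruct (selected_sum_in_E x a u sel m u_start u_mono) as [-> | HE].
  - rewrite sn_zero. auto.
  - apply E_bounded. apply (Eab_mono x a (u m)); auto.
Qed.

(** Real coefficients in [[-1,1]]: a signed sum of increments is the
    difference of two selected sums. *)
Lemma real_coef_bound (c : nat -> R) : (forall k, (k < m)%nat -> -1 <= c k <= 1) ->
  sn i (vsum (fun k => rs (c k) (incr x u k)) m) <= 2 * B.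
Proof.
  intros Hc. rewrite <- (vadd_0l (vsum _ m)). apply signed_sums_bound; auto.
  intros sgn. rewrite vadd_0l.
  replace (vsum (fun k => if sgn k then incr x u k else vopp (incr x u k)) m)
    with (vsub (selected_sum x u sgn m) (selected_sum x u (fun k => negb (sgn k)) m)).
  - eapply Rle_trans; [apply sn_sub_le |].
    pose proof (selected_sum_bound sgn). pose proof (selected_sum_bound (fun k => negb (sgn k))).
    lra.
  - unfold selected_sum. rewrite <- vsum_sub. apply vsum_ext. intros k _.
    destruct (sgn k); simpl; unfold vsub; [rewrite vopp_zero, vadd_0 | rewrite vadd_0l]; auto.
Qed.

Lemma real_coef_bound_scaled (c : nat -> R) (eta : R) : 0 < eta ->
  (forall k, (k < m)%nat -> Rabs (c k) <= eta) ->
  sn i (vsum (fun k => rs (c k) (incr x u k)) m) <= 2 * B * eta.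
Proof.
  intros He Hc.
  replace (vsum (fun k => rs (c k) (incr x u k)) m)
    with (rs eta (vsum (fun k => rs (c k / eta) (incr x u k)) m)).
  - rewrite sn_rs, Rabs_right by lra.
    assert (sn i (vsum (fun k => rs (c k / eta) (incr x u k)) m) <= 2 * B).
    { apply real_coef_bound. intros k Hk. specialize (Hc k Hk).
      apply Rabs_le_inv in Hc.
      split; apply (Rmult_le_reg_r eta); try lra; field_simplify; lra. }
    nra.
  - unfold rs at 1. rewrite <- vsum_scal. apply vsum_ext. intros k _.
    fold (rs eta (rs (c k / eta) (incr x u k))). rewrite rs_rs. f_equal. field. lra.
Qed.

(** Complex coefficients of modulus [<= eta]: split into real and imaginary parts. *)
Lemma coef_bound (c : nat -> Cplx) (eta : R) : 0 < eta ->
  (forall k, (k < m)%nat -> Cnorm (c k) <= eta) ->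
  sn i (vsum (fun k => vscal (c k) (incr x u k)) m) <= 4 * B * eta.
Proof.
  intros He Hc.
  replace (vsum (fun k => vscal (c k) (incr x u k)) m)
    with (vadd (vsum (fun k => rs (Re (c k)) (incr x u k)) m)
               (Jm (vsum (fun k => rs (Im (c k)) (incr x u k)) m))).
  - eapply Rle_trans; [apply sn_triangle |]. rewrite sn_Jm.
    assert (sn i (vsum (fun k => rs (Re (c k)) (incr x u k)) m) <= 2 * B * eta).
    { apply real_coef_bound_scaled; auto. intros k Hk.
      pose proof (Re_le_Cnorm (c k)). pose proof (Hc k Hk). lra. }
    assert (sn i (vsum (fun k => rs (Im (c k)) (incr x u k)) m) <= 2 * B * eta).
    { apply real_coef_bound_scaled; auto. intros k Hk.
      pose proof (Im_le_Cnorm (c k)). pose proof (Hc k Hk). lra. }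
    lra.
  - unfold Jm. rewrite <- vsum_scal, <- vsum_add. apply vsum_ext. intros k _.
    destruct (c k) as [r s]. simpl. rewrite (vscal_decomp r s).
    fold (Jm (rs s (incr x u k))). rewrite Jm_rs. reflexivity.
Qed.

End CoefficientBounds.

(** ** Common refinement of two weighted sums of increments *)

Section CommonRefinement.
Context {X : LCS}.
Variable x : R -> X.

Definition weighted_sum (u : nat -> R) (c : nat -> Cplx) (m : nat) : X :=
  vsum (fun k => vscal (c k) (incr x u k)) m.

(** [(w, e, r)] is a common refinement of the chains [u] and [v] on which the
    difference of the two weighted sums is again a weighted sum, whose
    coefficients are differences [c_k - d_l] of coefficients of overlapping
    steps (up to a common sign). *)
Definition refines_difference (u : nat -> R) (c : nat -> Cplx) (m : nat)
    (v : nat -> R) (d : nat -> Cplx) (n : nat) (w : nat -> R) (e : nat -> Cplx) (r : nat) :=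
  w O = u O /\ w r = u m /\ mono w r /\
  vsub (weighted_sum u c m) (weighted_sum v d n) = weighted_sum w e r /\
  forall j, (j < r)%nat -> exists k l, (k < m)%nat /\ (l < n)%nat /\
    Cnorm (e j) = Cnorm (Cadd (c k) (Copp (d l))) /\
    u k <= w j /\ w (S j) <= u (S k) /\ v l <= w j /\ w (S j) <= v (S l).

Lemma weighted_sum_flat u c m : mono u m -> u O = u m -> weighted_sum u c m = vzero.
Proof.
  intros Hm Hend. unfold weighted_sum. rewrite <- (vsum_zero m). apply vsum_ext.
  intros k Hk. pose proof (mono_in u m (u O) (u O) Hm eq_refl (eq_sym Hend)) as Hin.
  unfold incr. replace (u (S k)) with (u k) by (pose proof (Hin k ltac:(lia));
    pose proof (Hin (S k) ltac:(lia)); lra).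
  rewrite vsub_diag, vscal_zero. auto.
Qed.

Lemma weighted_sum_opp w e r :
  weighted_sum w (fun j => Copp (e j)) r = vopp (weighted_sum w e r).
Proof.
  unfold weighted_sum. rewrite vopp_scal, <- vsum_scal. apply vsum_ext. intros k _.
  rewrite vscal_assoc. f_equal. unfold Copp, Cmul; simpl. f_equal; ring.
Qed.

Lemma refines_difference_swap u c m v d n w e r : v O = u O -> v n = u m ->
  refines_difference v d n u c m w e r ->
  refines_difference u c m v d n w (fun j => Copp (e j)) r.
Proof.
  intros H0 Hend [Hw0 [Hwr [Hwm [Heq Hsteps]]]].
  split; [congruence |]. split; [congruence |]. split; [auto |]. split.
  - rewrite weighted_sum_opp, <- Heq. symmetry. apply vsub_opp.
  - intros j Hj. destruct (Hsteps j Hj) as [l [k [Hl [Hk [He Hpos]]]]].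
    exists k, l. split; [auto |]. split; [auto |]. split; [| tauto].
    replace (Cnorm (Copp (e j))) with (Cnorm (e j)) by (unfold Cnorm, Copp; simpl; f_equal; ring).
    rewrite He. apply Cnorm_Csub_sym.
Qed.

Lemma refines_difference_flat u c m v d n : u O = v O -> u m = v n -> mono u m -> mono v n ->
  (m = 0 \/ n = 0)%nat -> refines_difference u c m v d n u c O.
Proof.
  intros H0 Hend Hu Hv Hmn.
  assert (Hu0 : u O = u m) by (destruct Hmn; subst; congruence).
  split; [auto |]. split; [auto |]. split; [intros k Hk; lia |]. split; [| intros j Hj; lia].
  rewrite (weighted_sum_flat u c), (weighted_sum_flat v d); auto; [| congruence].
  apply vsub_diag.
Qed.

(** Peeling off the first step when [u] has the shorter first step: the
    refinement starts with [[u_0, u_1]] carrying the coefficient [c_0 - d_0],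
    followed by a refinement of the remaining chains [u_1 <= u_2 <= ...] and
    [u_1 <= v_1 <= v_2 <= ...]. *)
Lemma refines_difference_cons u c m v d n w e r :
  u O = v O -> u O <= u 1%nat -> u 1%nat <= v 1%nat ->
  refines_difference (fun k => u (S k)) (fun k => c (S k)) m
    (fun k => match k with O => u 1%nat | S k => v (S k) end) d (S n) w e r ->
  refines_difference u c (S m) v d (S n)
    (fun j => match j with O => u O | S j => w j end)
    (fun j => match j with O => Cadd (c O) (Copp (d O)) | S j => e j end) (S r).
Proof.
  intros H0 Hu01 Huv [Hw0 [Hwr [Hwm [Heq Hsteps]]]].
  split; [auto |]. split; [auto |]. split.
  { intros [| j] Hj; [rewrite Hw0; auto | apply Hwm; lia]. }
  split.
  - unfold weighted_sum in *. rewrite !vsum_shift.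
    rewrite vsum_shift in Heq. unfold incr in *. simpl in *.
    rewrite <- Heq, Hw0, <- H0, vscal_Csub.
    (* split the first step of [v] at [u_1] *)
    rewrite <- (vsub_chain (x (v 1%nat)) (x (u 1%nat)) (x (u O))), vscal_distr_v.
    set (C0 := vscal (c O) (vsub (x (u 1%nat)) (x (u O)))).
    set (D0 := vscal (d O) (vsub (x (u 1%nat)) (x (u O)))).
    set (D1 := vscal (d O) (vsub (x (v 1%nat)) (x (u 1%nat)))).
    rewrite (vadd_comm D1 D0), <- vadd_assoc. apply vsub_add_add.
  - intros [| j] Hj.
    + exists O, O. simpl. rewrite Hw0. repeat split; try lia; lra.
    + destruct (Hsteps j ltac:(lia)) as [k [l [Hk [Hl [He [H1 [H2 [H3 H4]]]]]]]].
      exists (S k), l. repeat split; try lia; auto.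
      destruct l as [| l]; simpl in H3; lra.
Qed.

Lemma common_refinement N : forall m n, (m + n <= N)%nat ->
  forall u v c d, u O = v O -> u m = v n -> mono u m -> mono v n ->
  exists w e r, refines_difference u c m v d n w e r.
Proof.
  induction N as [| N IH]; intros m n Hmn u v c d H0 Hend Hu Hv.
  all: destruct (Nat.eq_dec m 0) as [Hm0 | Hm0];
    [exists u, c, O; apply refines_difference_flat; auto |].
  all: destruct (Nat.eq_dec n 0) as [Hn0 | Hn0];
    [exists u, c, O; apply refines_difference_flat; auto |].
  { lia. }
  destruct m as [| m]; [lia |]. destruct n as [| n]; [lia |].
  destruct (Rle_or_lt (u 1%nat) (v 1%nat)) as [Hle | Hlt].
  - destruct (IH m (S n) ltac:(lia) (fun k => u (S k))
      (fun k => match k with O => u 1%nat | S k => v (S k) end) (fun k => c (S k)) d)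
      as [w [e [r Hr]]]; simpl; auto.
    { intros k Hk. apply Hu. lia. }
    { intros [| k] Hk; simpl; [auto | apply Hv; lia]. }
    eexists _, _, _. apply (refines_difference_cons u c m v d n w e r); auto. apply Hu. lia.
  - destruct (IH n (S m) ltac:(lia) (fun k => v (S k))
      (fun k => match k with O => v 1%nat | S k => u (S k) end) (fun k => d (S k)) c)
      as [w [e [r Hr]]]; simpl; auto.
    { intros k Hk. apply Hv. lia. }
    { intros [| k] Hk; simpl; [lra | apply Hu; lia]. }
    eexists _, _, _. apply refines_difference_swap; auto.
    apply (refines_difference_cons v d n u c m w e r); auto; [apply Hv; lia | lra].
Qed.

End CommonRefinement.

(** ** The Cauchy estimate for Riemann–Stieltjes sums *)

Lemma division_mono a b n t s : tagged_division a b n t s -> mono t n.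
Proof. intros [_ [_ [Hm _]]] k Hk. apply (Hm (S k)). lia. Qed.

Lemma RS_sum_diff_bound {X : LCS} (x : R -> X) (a b : R) (i : Idx X) (B : R)
  (g : R -> Cplx) (eta del : R) :
  0 <= B -> (forall e, Eab X x a b e -> sn i e <= B) -> eta > 0 ->
  (forall u v, a <= u <= b -> a <= v <= b -> Rabs (u - v) < del ->
     Cnorm (Cadd (g u) (Copp (g v))) < eta) ->
  forall n t s n' t' s', tagged_division a b n t s -> mesh_lt n t (del / 2) ->
  tagged_division a b n' t' s' -> mesh_lt n' t' (del / 2) ->
  sn i (vsub (RS_sum X g x n t s) (RS_sum X g x n' t' s')) <= 4 * B * eta.
Proof.
  intros HB0 HB Heta Hg n t s n' t' s' Hd Hmesh Hd' Hmesh'.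
  pose proof (division_mono _ _ _ _ _ Hd) as Hmo. pose proof (division_mono _ _ _ _ _ Hd') as Hmo'.
  destruct Hd as [Ht0 [Htn [_ Hs]]]. destruct Hd' as [Ht0' [Htn' [_ Hs']]].
  pose proof (mono_in t n a b Hmo Ht0 Htn) as Hin.
  pose proof (mono_in t' n' a b Hmo' Ht0' Htn') as Hin'.
  destruct (common_refinement x (n + n') n n' (le_n _) t t'
    (fun k => g (s (S k))) (fun k => g (s' (S k))) ltac:(congruence) ltac:(congruence) Hmo Hmo')
    as [w [e [r [Hw0 [Hwr [Hwm [Heq Hsteps]]]]]]].
  change (RS_sum X g x n t s) with (weighted_sum x t (fun k => g (s (S k))) n).
  change (RS_sum X g x n' t' s') with (weighted_sum x t' (fun k => g (s' (S k))) n').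
  rewrite Heq. apply (coef_bound x a b i B HB0 HB w r Hwm); auto; try lra.
  (* the tags of two overlapping steps are less than [del] apart *)
  intros j Hj. destruct (Hsteps j Hj) as [k [l [Hk [Hl [He [H1 [H2 [H3 H4]]]]]]]].
  rewrite He. apply Rlt_le.
  pose proof (Hs (S k) ltac:(lia)). pose proof (Hs' (S l) ltac:(lia)).
  pose proof (Hmesh (S k) ltac:(lia)). pose proof (Hmesh' (S l) ltac:(lia)).
  simpl pred in *.
  pose proof (Hin k ltac:(lia)). pose proof (Hin (S k) ltac:(lia)).
  pose proof (Hin' l ltac:(lia)). pose proof (Hin' (S l) ltac:(lia)).
  assert (w j <= w (S j)) by (apply Hwm; auto).
  apply Hg; try lra. apply Rabs_def1; lra.
Qed.

Section UniformContinuity.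
Variables a b : R.
Hypothesis Hab : a <= b.

Definition clamp (t : R) : R := Rmax a (Rmin b t).

Lemma clamp_in t : a <= clamp t <= b.
Proof. unfold clamp, Rmax, Rmin. destruct (Rle_dec b t); destruct (Rle_dec a _); lra. Qed.

Lemma clamp_id t : a <= t <= b -> clamp t = t.
Proof. intros H. unfold clamp, Rmax, Rmin. destruct (Rle_dec b t); destruct (Rle_dec a _); lra. Qed.

Lemma clamp_lip s t : Rabs (clamp s - clamp t) <= Rabs (s - t).
Proof.
  unfold clamp, Rmax, Rmin.
  destruct (Rle_dec b s), (Rle_dec b t); repeat destruct (Rle_dec a _);
    unfold Rabs; repeat destruct (Rcase_abs _); lra.
Qed.

Variable g : R -> Cplx.
Hypothesis Hg : continuous_on_C g a b.

Lemma coordinate_continuous (h : Cplx -> R) :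
  (forall z, Rabs (h z) <= Cnorm z) -> (forall z w, h (Cadd z (Copp w)) = h z - h w) ->
  forall t, a <= t <= b -> continuity_pt (fun s => h (g (clamp s))) t.
Proof.
  intros Hh Hlin t Ht. unfold continuity_pt, continue_in, limit1_in, limit_in. simpl.
  unfold R_dist. intros eps Heps. destruct (Hg t Ht eps Heps) as [del [Hdel Hd]].
  exists del. split; auto. intros y [_ Hy]. rewrite (clamp_id t Ht), <- Hlin.
  eapply Rle_lt_trans; [apply Hh |]. apply Hd; [apply clamp_in |].
  pose proof (clamp_lip y t) as Hc. rewrite (clamp_id t Ht) in Hc. lra.
Qed.

(** Heine's theorem, applied to both coordinates. *)
Lemma uniform_continuity eps : eps > 0 -> exists del, del > 0 /\
  forall u v, a <= u <= b -> a <= v <= b -> Rabs (u - v) < del ->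
    Cnorm (Cadd (g u) (Copp (g v))) < eps.
Proof.
  intros He. assert (He2 : 0 < eps / 2) by lra.
  destruct (@Heine_cor2 (fun s => Re (g (clamp s))) a b
    (coordinate_continuous Re Re_le_Cnorm (fun z w => eq_refl)) (mkposreal _ He2)) as [d1 H1].
  destruct (@Heine_cor2 (fun s => Im (g (clamp s))) a b
    (coordinate_continuous Im Im_le_Cnorm (fun z w => eq_refl)) (mkposreal _ He2)) as [d2 H2].
  exists (Rmin d1 d2). split; [apply Rmin_pos; apply cond_pos |].
  intros u v Hu Hv Huv. simpl in H1, H2.
  specialize (H1 u v Hu Hv ltac:(pose proof (Rmin_l d1 d2); lra)).
  specialize (H2 u v Hu Hv ltac:(pose proof (Rmin_r d1 d2); lra)).
  rewrite !clamp_id in H1, H2 by auto.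
  eapply Rle_lt_trans; [apply Cnorm_le_sum |]. simpl. unfold Rminus in H1, H2. lra.
Qed.

End UniformContinuity.

(** Uniform subdivisions have arbitrarily small mesh. *)
Lemma division_exists a b del : a <= b -> del > 0 ->
  exists n t s, tagged_division a b n t s /\ mesh_lt n t del.
Proof.
  intros Hab Hd. destruct (INR_unbounded ((b - a) / del)) as [M HM].
  set (n := S M). assert (Hn : 0 < INR n) by (apply lt_0_INR; unfold n; lia).
  assert (HnM : INR M < INR n) by (apply lt_INR; unfold n; lia).
  set (t := fun k => a + INR k * (b - a) / INR n).
  assert (Hstep : forall k, t (S k) - t k = (b - a) / INR n)
    by (intros k; unfold t; rewrite S_INR; field; lra).
  assert (Hstep_nonneg : 0 <= (b - a) / INR n) by (unfold Rdiv; apply Rmult_le_pos; [lra | left; apply Rinv_0_lt_compat; lra]).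
  exists n, t, t. split; [split; [| split; [| split]] |].
  - unfold t. rewrite INR_0. field. lra.
  - unfold t. field. lra.
  - intros [| k] Hk; [lia |]. simpl pred. pose proof (Hstep k). lra.
  - intros [| k] Hk; [lia |]. simpl pred. pose proof (Hstep k). lra.
  - intros [| k] Hk; [lia |]. simpl pred. rewrite Hstep.
    apply (Rmult_lt_reg_r (INR n)); auto. unfold Rdiv. rewrite Rmult_assoc, Rinv_l, Rmult_1_r by lra.
    apply (Rmult_lt_reg_r (/ del)); [apply Rinv_0_lt_compat; lra |].
    replace (del * INR n * / del) with (INR n) by (field; lra). unfold Rdiv in HM. lra.
Qed.

Fixpoint running_min (d : nat -> R) (N : nat) : R :=
  match N with O => d O | S M => Rmin (running_min d M) (d (S M)) end.

Lemma running_min_pos d : (forall N, d N > 0) -> forall N, running_min d N > 0.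
Proof. intros H N; induction N; simpl; auto. apply Rmin_pos; auto. apply H. Qed.

Lemma running_min_le d N : running_min d N <= d N.
Proof. destruct N; simpl; [lra | apply Rmin_r]. Qed.

Lemma running_min_anti d N m : (N <= m)%nat -> running_min d m <= running_min d N.
Proof.
  intros H; induction H; simpl; [lra |]. pose proof (Rmin_l (running_min d m) (d (S m))). lra.
Qed.

Lemma mesh_weaken n t d1 d2 : d1 <= d2 -> mesh_lt n t d1 -> mesh_lt n t d2.
Proof. intros H Hm k Hk. specialize (Hm k Hk). lra. Qed.

(** A sequence of divisions [P m] whose mesh is below [delta N] for all [m >= N]
    (take mesh below [min (delta 0) ... (delta m)]). *)
Lemma divisions_decreasing_mesh a b (delta : nat -> R) : a <= b -> (forall N, delta N > 0) ->
  exists P : nat -> nat * (nat -> R) * (nat -> R), forall N m, (N <= m)%nat ->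
    tagged_division a b (fst (fst (P m))) (snd (fst (P m))) (snd (P m)) /\
    mesh_lt (fst (fst (P m))) (snd (fst (P m))) (delta N).
Proof.
  intros Hab Hdelta.
  destruct (choice (fun m (P : nat * (nat -> R) * (nat -> R)) =>
      tagged_division a b (fst (fst P)) (snd (fst P)) (snd P) /\
      mesh_lt (fst (fst P)) (snd (fst P)) (running_min delta m))) as [P HP].
  { intros m. destruct (division_exists a b (running_min delta m) Hab
      (running_min_pos delta Hdelta m)) as [n [t [s Hd]]].
    exists (n, t, s). auto. }
  exists P. intros N m Hm. destruct (HP m) as [Hd Hmesh]. split; auto.
  apply (mesh_weaken _ _ (running_min delta m)); auto.
  pose proof (running_min_le delta N). pose proof (running_min_anti delta N m Hm). lra.
Qed.

Lemma inverse_small (C eps : R) : eps > 0 -> exists N, C * / (INR N + 1) < eps.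
Proof.
  intros He. destruct (INR_unbounded (Rabs C / eps)) as [N HN]. exists N.
  pose proof (pos_INR N). pose proof (Rle_abs C).
  apply (Rmult_lt_reg_r (INR N + 1)); [lra |]. rewrite Rmult_assoc, Rinv_l, Rmult_1_r by lra.
  apply (Rmult_lt_reg_r (/ eps)); [apply Rinv_0_lt_compat; lra |].
  replace (eps * (INR N + 1) * / eps) with (INR N + 1) by (field; lra). unfold Rdiv in HN.
  assert (C * / eps <= Rabs C * / eps) by (apply Rmult_le_compat_r; [left; apply Rinv_0_lt_compat |]; lra).
  lra.
Qed.

(** The sums over a
    sequence of divisions of decreasing mesh form a Cauchy sequence, and its
    limit is the integral. *)
Lemma RS_integrable_of_cauchy (X : LCS) (g : R -> Cplx) (x : R -> X) (a b : R)
  (C : Idx X -> R) :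
  a <= b -> sequentially_complete X ->
  (forall eta, eta > 0 -> exists del, del > 0 /\
     forall i n t s n' t' s', tagged_division a b n t s -> mesh_lt n t del ->
       tagged_division a b n' t' s' -> mesh_lt n' t' del ->
       sn i (vsub (RS_sum X g x n t s) (RS_sum X g x n' t' s')) <= C i * eta) ->
  RS_integrable X g x a b.
Proof.
  intros Hab Hsc Hcauchy.
  assert (Hinv : forall N, / (INR N + 1) > 0)
    by (intros N; apply Rinv_0_lt_compat; pose proof (pos_INR N); lra).
  destruct (choice _ (fun N => Hcauchy _ (Hinv N))) as [delta Hdelta].
  destruct (divisions_decreasing_mesh a b delta Hab (fun N => proj1 (Hdelta N))) as [P HP].
  set (y := fun m => RS_sum X g x (fst (fst (P m))) (snd (fst (P m))) (snd (P m))).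
  assert (Hcmp : forall i N m n t s, (N <= m)%nat ->
      tagged_division a b n t s -> mesh_lt n t (delta N) ->
      sn i (vsub (RS_sum X g x n t s) (y m)) <= C i * / (INR N + 1)).
  { intros i N m n t s Hm Hd Hmesh. destruct (HP N m Hm).
    apply (proj2 (Hdelta N)); auto. }
  assert (Hcy : cauchy_seq X y).
  { intros i eps He. destruct (inverse_small (C i) eps He) as [N HN].
    exists N. intros m n Hm Hn. destruct (HP N m Hm).
    eapply Rle_lt_trans; [| exact HN]. apply Hcmp; auto. }
  destruct (Hsc y Hcy) as [I HI].
  exists I. intros i eps He.
  destruct (inverse_small (C i) (eps / 2) ltac:(lra)) as [N HN].
  destruct (HI i (eps / 2) ltac:(lra)) as [M HM].
  exists (delta N). split; [apply Hdelta |]. intros n t s Hd Hmesh.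
  pose proof (HM (Nat.max N M) ltac:(lia)).
  pose proof (Hcmp i N (Nat.max N M) n t s ltac:(lia) Hd Hmesh).
  pose proof (sn_sub_tri i (RS_sum X g x n t s) (y (Nat.max N M)) I). lra.
Qed.

Theorem corollary1 (X : LCS) (a b : R) (x : R -> X) :
  a <= b ->
  sequentially_complete X ->
  weakly_compact_semivariation X x a b ->
  forall g : R -> Cplx, continuous_on_C g a b ->
  RS_integrable X g x a b.
Proof.
  intros Hab Hsc Hwc g Hg.
  assert (HE : forall i, exists B, 0 <= B /\ forall e, Eab X x a b e -> sn i e <= B).
  { intros i. destruct (bounded_of_weakly_bounded (Eab X x a b) i) as [B HB].
    - intros phi K Hl HK Hd. apply (real_weak_bounded _ i phi K Hwc Hl HK Hd).
    - exists (Rmax B 0). split; [apply Rmax_r |].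
      intros e He. pose proof (HB e He). pose proof (Rmax_l B 0). lra. }
  destruct (choice _ HE) as [B HB].
  apply (RS_integrable_of_cauchy X g x a b (fun i => 4 * B i)); auto.
  intros eta Heta. destruct (uniform_continuity a b Hab g Hg eta Heta) as [del [Hdel Hunif]].
  exists (del / 2). split; [lra |]. intros i. destruct (HB i) as [HB0 HBi].
  apply (RS_sum_diff_bound x a b i (B i) g eta del); auto.
Qed.
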